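(* (1) $\mathsf{LKur}$ is strictly contained in $\mathsf{GKur}$. (2) $\mathsf{MGrz}\vee\mathsf{LKur}=\mathsf{MGrz}\vee\mathsf{GKur}$, where $\vee$ denotes the smallest extension of $\mathsf{MS4}$ containing both logics.
   Context: $\mathsf{MIPC}$ is the smallest set of formulas in the bimodal language $\mathcal{L}_{\forall\exists}$ containing all theorems of $\mathsf{IPC}$; $\forall(p\wedge q)\leftrightarrow(\forall p\wedge\forall q)$, $\forall p\to p$, $\forall p\to\forall\forall p$; $\exists(p\vee q)\leftrightarrow(\exists p\vee\exists q)$, $p\to\exists p$, $\exists\exists p\to\exists p$, $(\exists p\wedge\exists q)\to\exists(\exists p\wedge q)$; $\exists\forall p\to\forall p$, $\exists p\to\forall\exists p$; closed under modus ponens, substitution and $\varphi/\forall\varphi$. $\mathsf{Kur}=\mathsf{MIPC}+\forall\neg\neg p\to\neg\neg\forall p$. $\mathsf{MS4}$ is the smallest set of formulas in the classical bimodal language $\mathcal{L}_{\Box\forall}$ containing all classical tautologies, the $\mathsf{S4}$ axioms for $\Box$, the $\mathsf{S5}$ axioms for $\forall$, and $\Box\forall p\to\forall\Box p$, closed under modus ponens, substitution, $\Box$- and $\forall$-necessitation; $\Diamond=\neg\Box\neg$, $\exists=\neg\forall\neg$. $\mathsf{MGrz}=\mathsf{MS4}+\Box(\Box(p\to\Box p)\to p)\to p$; $\mathsf{LKur}=\mathsf{MS4}+\Box\forall\Diamond\Box p\to\Diamond\forall p$; $\mathsf{GKur}=\mathsf{MS4}+\{\varphi^t:\mathsf{Kur}\vdash\varphi\}$,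 with $(-)^t$ the Gödel translation: $\bot^t=\bot$, $p^t=\Box p$, $(\varphi\wedge\psi)^t=\varphi^t\wedge\psi^t$, $(\varphi\vee\psi)^t=\varphi^t\vee\psi^t$, $(\varphi\to\psi)^t=\Box(\neg\varphi^t\vee\psi^t)$, $(\forall\varphi)^t=\Box\forall\varphi^t$, $(\exists\varphi)^t=\exists\varphi^t$. *)

From Stdlib Require Import Bool.

Inductive iform : Type :=
| IVar : nat -> iform
| IBot : iform
| IAnd : iform -> iform -> iform
| IOr  : iform -> iform -> iform
| IImp : iform -> iform -> iform
| IAll : iform -> iform
| IEx  : iform -> iform.

Definition INeg (a : iform) : iform := IImp a IBot.
Definition IIff (a b : iform) : iform := IAnd (IImp a b) (IImp b a).

Fixpoint isubst (s : nat -> iform) (a : iform) : iform :=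
  match a with
  | IVar n => s n
  | IBot => IBot
  | IAnd x y => IAnd (isubst s x) (isubst s y)
  | IOr x y => IOr (isubst s x) (isubst s y)
  | IImp x y => IImp (isubst s x) (isubst s y)
  | IAll x => IAll (isubst s x)
  | IEx x => IEx (isubst s x)
  end.

Inductive ipc_axiom : iform -> Prop :=
| ipcK a b : ipc_axiom (IImp a (IImp b a))
| ipcS a b c : ipc_axiom (IImp (IImp a (IImp b c)) (IImp (IImp a b) (IImp a c)))
| ipcAndI a b : ipc_axiom (IImp a (IImp b (IAnd a b)))
| ipcAndE1 a b : ipc_axiom (IImp (IAnd a b) a)
| ipcAndE2 a b : ipc_axiom (IImp (IAnd a b) b)
| ipcOrI1 a b : ipc_axiom (IImp a (IOr a b))
| ipcOrI2 a b : ipc_axiom (IImp b (IOr a b))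
| ipcOrE a b c : ipc_axiom (IImp (IImp a c) (IImp (IImp b c) (IImp (IOr a b) c)))
| ipcBot a : ipc_axiom (IImp IBot a).

Definition ip : iform := IVar 0.
Definition iq : iform := IVar 1.

Inductive mipc_axiom : iform -> Prop :=
| mAllAnd : mipc_axiom (IIff (IAll (IAnd ip iq)) (IAnd (IAll ip) (IAll iq)))
| mAllT : mipc_axiom (IImp (IAll ip) ip)
| mAll4 : mipc_axiom (IImp (IAll ip) (IAll (IAll ip)))
| mExOr : mipc_axiom (IIff (IEx (IOr ip iq)) (IOr (IEx ip) (IEx iq)))
| mExT : mipc_axiom (IImp ip (IEx ip))
| mEx4 : mipc_axiom (IImp (IEx (IEx ip)) (IEx ip))
| mExAnd : mipc_axiom (IImp (IAnd (IEx ip) (IEx iq)) (IEx (IAnd (IEx ip) iq)))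
| mExAll : mipc_axiom (IImp (IEx (IAll ip)) (IAll ip))
| mExAllEx : mipc_axiom (IImp (IEx ip) (IAll (IEx ip))).

Inductive mipc_ext (G : iform -> Prop) : iform -> Prop :=
| mi_ipc a : ipc_axiom a -> mipc_ext G a
| mi_ax a : mipc_axiom a -> mipc_ext G a
| mi_extra a : G a -> mipc_ext G a
| mi_mp a b : mipc_ext G (IImp a b) -> mipc_ext G a -> mipc_ext G b
| mi_subst s a : mipc_ext G a -> mipc_ext G (isubst s a)
| mi_nec a : mipc_ext G a -> mipc_ext G (IAll a).

Definition MIPC : iform -> Prop := mipc_ext (fun _ => False).

Definition kur_axiom : iform :=
  IImp (IAll (INeg (INeg ip))) (INeg (INeg (IAll ip))).

Definition Kur : iform -> Prop := mipc_ext (fun a => a = kur_axiom).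

Inductive cform : Type :=
| CVar : nat -> cform
| CBot : cform
| CAnd : cform -> cform -> cform
| COr  : cform -> cform -> cform
| CImp : cform -> cform -> cform
| CBox : cform -> cform
| CAll : cform -> cform.

Definition CNeg (a : cform) : cform := CImp a CBot.
Definition CDia (a : cform) : cform := CNeg (CBox (CNeg a)).
Definition CEx (a : cform) : cform := CNeg (CAll (CNeg a)).

Fixpoint csubst (s : nat -> cform) (a : cform) : cform :=
  match a with
  | CVar n => s n
  | CBot => CBot
  | CAnd x y => CAnd (csubst s x) (csubst s y)
  | COr x y => COr (csubst s x) (csubst s y)
  | CImp x y => CImp (csubst s x) (csubst s y)
  | CBox x => CBox (csubst s x)
  | CAll x => CAll (csubst s x)
  end.

(* Classical truth-table evaluation, treating variables and modalized
   subformulas (Box _, All _) as propositional atoms. *)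
Fixpoint ceval (v : cform -> bool) (a : cform) : bool :=
  match a with
  | CVar n => v (CVar n)
  | CBot => false
  | CAnd x y => ceval v x && ceval v y
  | COr x y => ceval v x || ceval v y
  | CImp x y => implb (ceval v x) (ceval v y)
  | CBox x => v (CBox x)
  | CAll x => v (CAll x)
  end.

Definition tautology (a : cform) : Prop := forall v, ceval v a = true.

Definition cp : cform := CVar 0.
Definition cq : cform := CVar 1.

Inductive ms4_axiom : cform -> Prop :=
| sBoxK : ms4_axiom (CImp (CBox (CImp cp cq)) (CImp (CBox cp) (CBox cq)))
| sBoxT : ms4_axiom (CImp (CBox cp) cp)
| sBox4 : ms4_axiom (CImp (CBox cp) (CBox (CBox cp)))
| sAllK : ms4_axiom (CImp (CAll (CImp cp cq)) (CImp (CAll cp) (CAll cq)))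
| sAllT : ms4_axiom (CImp (CAll cp) cp)
| sAll4 : ms4_axiom (CImp (CAll cp) (CAll (CAll cp)))
| sAll5 : ms4_axiom (CImp (CEx cp) (CAll (CEx cp)))
| sLC : ms4_axiom (CImp (CBox (CAll cp)) (CAll (CBox cp))).

Inductive ms4_ext (G : cform -> Prop) : cform -> Prop :=
| ms_taut a : tautology a -> ms4_ext G a
| ms_ax a : ms4_axiom a -> ms4_ext G a
| ms_extra a : G a -> ms4_ext G a
| ms_mp a b : ms4_ext G (CImp a b) -> ms4_ext G a -> ms4_ext G b
| ms_subst s a : ms4_ext G a -> ms4_ext G (csubst s a)
| ms_necBox a : ms4_ext G a -> ms4_ext G (CBox a)
| ms_necAll a : ms4_ext G a -> ms4_ext G (CAll a).

Definition MS4 : cform -> Prop := ms4_ext (fun _ => False).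

Definition grz_axiom : cform :=
  CImp (CBox (CImp (CBox (CImp cp (CBox cp))) cp)) cp.
Definition MGrz : cform -> Prop := ms4_ext (fun a => a = grz_axiom).

Definition lkur_axiom : cform :=
  CImp (CBox (CAll (CDia (CBox cp)))) (CDia (CAll cp)).
Definition LKur : cform -> Prop := ms4_ext (fun a => a = lkur_axiom).

Fixpoint gtr (a : iform) : cform :=
  match a with
  | IVar n => CBox (CVar n)
  | IBot => CBot
  | IAnd x y => CAnd (gtr x) (gtr y)
  | IOr x y => COr (gtr x) (gtr y)
  | IImp x y => CBox (COr (CNeg (gtr x)) (gtr y))
  | IAll x => CBox (CAll (gtr x))
  | IEx x => CEx (gtr x)
  end.

Definition GKur : cform -> Prop :=
  ms4_ext (fun a => exists b, Kur b /\ a = gtr b).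

Definition join (L1 L2 : cform -> Prop) : cform -> Prop :=
  ms4_ext (fun a => L1 a \/ L2 a).

(* Over MS4 the translation Kur^t of the Kuroda axiom proves the LKur axiom
   □∀◇□p → ◇∀p, and every extension of MS4 containing Kur^t proves the
   translation of every theorem of Kur; hence LKur ⊆ GKur = MS4 + Kur^t.
   Conversely LKur proves Kur^t as soon as □◇q → ◇□q is available, and
   McKinsey's formula is a theorem of Grz, which gives the equality of the
   joins.  The inclusion is strict: the frame with a root below a two-point
   cluster, whose points lie in different ∀-classes (the root sharing its class
   with one of them), validates LKur but refutes Kur^t. *)

From Stdlib Require Import Bool List.
Import ListNotations.

Declare Scope cform_scope.
Notation "⊥" := CBot : cform_scope.
Notation "¬ a" := (CNeg a) (at level 35, right associativity) : cform_scope.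
Notation "□ a" := (CBox a) (at level 35, right associativity) : cform_scope.
Notation "◇ a" := (CDia a) (at level 35, right associativity) : cform_scope.
Notation "∀ a" := (CAll a) (at level 35, right associativity) : cform_scope.
Notation "∃ a" := (CEx a) (at level 35, right associativity) : cform_scope.
Notation "a ∧ b" := (CAnd a b) (at level 80, right associativity) : cform_scope.
Notation "a ∨ b" := (COr a b) (at level 85, right associativity) : cform_scope.
Notation "a ⊃ b" := (CImp a b) (at level 90, right associativity) : cform_scope.
Notation "a ⇒ b" := (CBox (COr (CNeg a) b)) (at level 90, right associativity) : cform_scope.
Notation "G ⊢ a" := (ms4_ext G a) (at level 95, no associativity) : cform_scope.
Open Scope cform_scope.

Ltac taut :=
  apply ms_taut; let v := fresh "v" in intro v;
  cbv [CNeg CDia CEx cp cq]; cbn [ceval];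
  repeat match goal with
         | |- context [ceval v ?x] => destruct (ceval v x)
         | |- context [v ?x] => destruct (v x)
         end; reflexivity.

(* [taut_from h1 .. hn] proves [c] from [hi : G ⊢ ai] when [a1 ⊃ .. ⊃ an ⊃ c]
   is a tautology. *)
Tactic Notation "taut_from" uconstr(h1) :=
  refine (ms_mp _ _ _ _ h1); taut.
Tactic Notation "taut_from" uconstr(h1) uconstr(h2) :=
  refine (ms_mp _ _ _ _ h2); taut_from h1.
Tactic Notation "taut_from" uconstr(h1) uconstr(h2) uconstr(h3) :=
  refine (ms_mp _ _ _ _ h3); taut_from h1 h2.

Lemma ms4_ext_sub (G H : cform -> Prop) :
  (forall a, G a -> H ⊢ a) -> forall a, G ⊢ a -> H ⊢ a.
Proof.
  intros hGH a ha; induction ha.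
  - now apply ms_taut.
  - now apply ms_ax.
  - now apply hGH.
  - eapply ms_mp; eassumption.
  - now apply ms_subst.
  - now apply ms_necBox.
  - now apply ms_necAll.
Qed.

Definition subst_pq (a b : cform) (n : nat) : cform :=
  match n with 0 => a | 1 => b | _ => CVar n end.

Section MS4Theorems.
Context {G : cform -> Prop}.

Lemma box_K a b : G ⊢ □ (a ⊃ b) ⊃ □ a ⊃ □ b.
Proof. exact (ms_subst _ (subst_pq a b) _ (ms_ax _ _ sBoxK)). Qed.
Lemma box_T a : G ⊢ □ a ⊃ a.
Proof. exact (ms_subst _ (subst_pq a a) _ (ms_ax _ _ sBoxT)). Qed.
Lemma box_4 a : G ⊢ □ a ⊃ □ □ a.
Proof. exact (ms_subst _ (subst_pq a a) _ (ms_ax _ _ sBox4)). Qed.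
Lemma all_K a b : G ⊢ ∀ (a ⊃ b) ⊃ ∀ a ⊃ ∀ b.
Proof. exact (ms_subst _ (subst_pq a b) _ (ms_ax _ _ sAllK)). Qed.
Lemma all_T a : G ⊢ ∀ a ⊃ a.
Proof. exact (ms_subst _ (subst_pq a a) _ (ms_ax _ _ sAllT)). Qed.
Lemma all_4 a : G ⊢ ∀ a ⊃ ∀ ∀ a.
Proof. exact (ms_subst _ (subst_pq a a) _ (ms_ax _ _ sAll4)). Qed.
Lemma all_5 a : G ⊢ ∃ a ⊃ ∀ ∃ a.
Proof. exact (ms_subst _ (subst_pq a a) _ (ms_ax _ _ sAll5)). Qed.
Lemma box_all_comm a : G ⊢ □ ∀ a ⊃ ∀ □ a.
Proof. exact (ms_subst _ (subst_pq a a) _ (ms_ax _ _ sLC)). Qed.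

Lemma imp_trans a b c : G ⊢ a ⊃ b -> G ⊢ b ⊃ c -> G ⊢ a ⊃ c.
Proof. intros hab hbc; taut_from hab hbc. Qed.

Lemma imp_contra a b : G ⊢ a ⊃ b -> G ⊢ ¬ b ⊃ ¬ a.
Proof. intros h; taut_from h. Qed.

Lemma box_mono a b : G ⊢ a ⊃ b -> G ⊢ □ a ⊃ □ b.
Proof. intros h; exact (ms_mp _ _ _ (box_K a b) (ms_necBox _ _ h)). Qed.

Lemma all_mono a b : G ⊢ a ⊃ b -> G ⊢ ∀ a ⊃ ∀ b.
Proof. intros h; exact (ms_mp _ _ _ (all_K a b) (ms_necAll _ _ h)). Qed.

Lemma dia_mono a b : G ⊢ a ⊃ b -> G ⊢ ◇ a ⊃ ◇ b.
Proof. intros h; apply imp_contra, box_mono, imp_contra, h. Qed.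

Lemma ex_mono a b : G ⊢ a ⊃ b -> G ⊢ ∃ a ⊃ ∃ b.
Proof. intros h; apply imp_contra, all_mono, imp_contra, h. Qed.

Lemma box_4_mono a b : G ⊢ □ a ⊃ b -> G ⊢ □ a ⊃ □ b.
Proof. intros h; exact (imp_trans _ _ _ (box_4 a) (box_mono _ _ h)). Qed.

Lemma box_and a b : G ⊢ □ a ∧ □ b ⊃ □ (a ∧ b).
Proof.
  assert (h : G ⊢ □ a ⊃ □ (b ⊃ a ∧ b)) by (apply box_mono; taut).
  taut_from h (box_K b (a ∧ b)).
Qed.

Lemma all_and a b : G ⊢ ∀ a ∧ ∀ b ⊃ ∀ (a ∧ b).
Proof.
  assert (h : G ⊢ ∀ a ⊃ ∀ (b ⊃ a ∧ b)) by (apply all_mono; taut).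
  taut_from h (all_K b (a ∧ b)).
Qed.

Lemma ex_or a b : G ⊢ ∃ (a ∨ b) ⊃ ∃ a ∨ ∃ b.
Proof.
  assert (h : G ⊢ ∀ ¬ a ∧ ∀ ¬ b ⊃ ∀ ¬ (a ∨ b)).
  { apply (imp_trans _ _ _ (all_and _ _)), all_mono; taut. }
  taut_from h.
Qed.

Lemma all_ex_and a b : G ⊢ ∀ a ∧ ∃ b ⊃ ∃ (a ∧ b).
Proof.
  assert (h : G ⊢ ∀ a ∧ ∀ ¬ (a ∧ b) ⊃ ∀ ¬ b).
  { apply (imp_trans _ _ _ (all_and _ _)), all_mono; taut. }
  taut_from h.
Qed.

Lemma all_B a : G ⊢ a ⊃ ∀ ∃ a.
Proof. taut_from (all_T (¬ a)) (all_5 a). Qed.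

Lemma ex_all_B a : G ⊢ ∃ ∀ a ⊃ a.
Proof.
  assert (h : G ⊢ ∃ ¬ a ⊃ ¬ ∀ a).
  { apply imp_contra, all_mono; taut. }
  taut_from (all_B (¬ a)) (all_mono _ _ h).
Qed.

Lemma ex_dia_comm a : G ⊢ ∃ ◇ a ⊃ ◇ ∃ a.
Proof.
  apply imp_contra.
  apply (imp_trans _ (□ ∀ ¬ a)); [apply box_mono; taut|].
  apply (imp_trans _ _ _ (box_all_comm _)), all_mono; taut.
Qed.

Lemma dia_all_comm a : G ⊢ ◇ ∀ a ⊃ ∀ ◇ a.
Proof.
  apply (imp_trans _ _ _ (all_B _)), all_mono.
  exact (imp_trans _ _ _ (ex_dia_comm _) (dia_mono _ _ (ex_all_B _))).
Qed.

Lemma ex_persistent a : G ⊢ a ⊃ □ a -> G ⊢ ∃ a ⊃ □ ∃ a.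
Proof.
  intros ha.
  assert (h : G ⊢ ◇ ¬ a ⊃ ¬ a).
  { assert (h' : G ⊢ □ a ⊃ □ ¬ ¬ a) by (apply box_mono; taut).
    taut_from ha h'. }
  taut_from (dia_all_comm (¬ a)) (all_mono _ _ h).
Qed.

Lemma box_all_box a : G ⊢ □ ∀ a ⊃ □ ∀ □ a.
Proof. apply box_4_mono, box_all_comm. Qed.

Lemma box_all_4 a : G ⊢ □ ∀ a ⊃ □ ∀ □ ∀ a.
Proof.
  apply box_4_mono.
  exact (imp_trans _ _ _ (box_mono _ _ (all_4 _)) (box_all_comm _)).
Qed.

Lemma ex_box_all a : G ⊢ ∃ □ ∀ a ⊃ □ ∀ a.
Proof.
  apply (imp_trans _ _ _ (ex_mono _ _ (box_mono _ _ (all_4 _)))).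
  apply (imp_trans _ _ _ (ex_mono _ _ (box_all_comm _))), ex_all_B.
Qed.

Lemma box_dia_of_grz a : G ⊢ grz_axiom -> G ⊢ □ ◇ a ⊃ ◇ □ a.
Proof.
  intros hgrz.
  set (w := ¬ a ⊃ □ ¬ a).
  set (z := □ w ⊃ ¬ a).
  assert (hg : G ⊢ □ z ⊃ ¬ a) by exact (ms_subst _ (subst_pq (¬ a) (¬ a)) _ hgrz).
  assert (hz_dia : G ⊢ ◇ a ⊃ ¬ □ z).
  { taut_from (box_mono _ _ hg) (box_4 z). }
  (* □w and □◇a would give □a, so under □◇a ∧ ¬□a the premise of z fails. *)
  assert (hw : G ⊢ □ w ∧ □ ◇ a ⊃ □ a).
  { apply (imp_trans _ _ _ (box_and _ _)), box_mono; subst w; taut. }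
  assert (hz : G ⊢ □ (□ ◇ a ∧ ¬ □ a) ⊃ □ z).
  { apply box_mono; subst z; taut_from hw. }
  assert (hz_box : G ⊢ □ ◇ a ∧ □ ¬ □ a ⊃ □ z).
  { taut_from (box_4 (◇ a)) (box_and (□ ◇ a) (¬ □ a)) hz. }
  taut_from (box_T (◇ a)) hz_dia hz_box.
Qed.

End MS4Theorems.

Section GoedelTranslation.
Context {G : cform -> Prop}.

Lemma strict_imp_intro a b : G ⊢ a ⊃ b -> G ⊢ a ⇒ b.
Proof. intros h; apply ms_necBox; taut_from h. Qed.

Lemma strict_imp_intro_under c a b :
  G ⊢ c ⊃ □ c -> G ⊢ c ∧ a ⊃ b -> G ⊢ c ⊃ (a ⇒ b).
Proof. intros hc h; apply (imp_trans _ _ _ hc), box_mono; taut_from h. Qed.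

Lemma strict_imp_elim a b : G ⊢ (a ⇒ b) ∧ a ⊃ b.
Proof. taut_from (box_T (¬ a ∨ b)). Qed.

Lemma strict_imp_imp a b : G ⊢ a ⇒ b -> G ⊢ a ⊃ b.
Proof. intros h; taut_from h (box_T (¬ a ∨ b)). Qed.

Lemma strict_iff_intro a b :
  G ⊢ a ⊃ b -> G ⊢ b ⊃ a -> G ⊢ (a ⇒ b) ∧ (b ⇒ a).
Proof. intros hab hba; taut_from (strict_imp_intro _ _ hab) (strict_imp_intro _ _ hba). Qed.

Lemma strict_neg_box a : G ⊢ (a ⇒ ⊥) ⊃ □ ¬ a.
Proof. apply box_mono; taut. Qed.

Lemma box_neg_strict a : G ⊢ □ ¬ a ⊃ (a ⇒ ⊥).
Proof. apply box_mono; taut. Qed.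

Lemma strict_dneg_box_dia a : G ⊢ ((a ⇒ ⊥) ⇒ ⊥) ⊃ □ ◇ a.
Proof. apply box_mono; taut_from (box_neg_strict a). Qed.

Lemma box_dia_strict_dneg a : G ⊢ □ ◇ a ⊃ ((a ⇒ ⊥) ⇒ ⊥).
Proof. apply box_mono; taut_from (strict_neg_box a). Qed.

Lemma and_persistent a b :
  G ⊢ a ⊃ □ a -> G ⊢ b ⊃ □ b -> G ⊢ a ∧ b ⊃ □ (a ∧ b).
Proof. intros ha hb; taut_from ha hb (box_and a b). Qed.

Lemma or_persistent a b :
  G ⊢ a ⊃ □ a -> G ⊢ b ⊃ □ b -> G ⊢ a ∨ b ⊃ □ (a ∨ b).
Proof.
  intros ha hb.
  assert (ha' : G ⊢ a ⊃ □ (a ∨ b)) by (apply (imp_trans _ _ _ ha), box_mono; taut).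
  assert (hb' : G ⊢ b ⊃ □ (a ∨ b)) by (apply (imp_trans _ _ _ hb), box_mono; taut).
  taut_from ha' hb'.
Qed.

Lemma gtr_persistent a : G ⊢ gtr a ⊃ □ gtr a.
Proof.
  induction a; cbn [gtr].
  - apply box_4.
  - taut.
  - now apply and_persistent.
  - now apply or_persistent.
  - apply box_4.
  - apply box_4.
  - now apply ex_persistent.
Qed.

Lemma gtr_ipc_axiom x : ipc_axiom x -> G ⊢ gtr x.
Proof.
  intros []; cbn [gtr]; apply strict_imp_intro; try taut.
  - apply strict_imp_intro_under; [apply gtr_persistent | taut].
  - apply strict_imp_intro_under; [apply box_4|].
    apply strict_imp_intro_under; [apply and_persistent; apply box_4|].
    taut_from (strict_imp_elim (gtr a) (gtr b ⇒ gtr c))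
      (strict_imp_elim (gtr a) (gtr b)) (strict_imp_elim (gtr b) (gtr c)).
  - apply strict_imp_intro_under; [apply gtr_persistent | taut].
  - apply strict_imp_intro_under; [apply box_4|].
    apply strict_imp_intro_under; [apply and_persistent; apply box_4|].
    taut_from (strict_imp_elim (gtr a) (gtr c)) (strict_imp_elim (gtr b) (gtr c)).
Qed.

Lemma gtr_mipc_axiom x : mipc_axiom x -> G ⊢ gtr x.
Proof.
  intros []; cbv [ip iq]; cbn [gtr].
  - apply strict_iff_intro.
    + assert (hp : G ⊢ □ ∀ (□ cp ∧ □ cq) ⊃ □ ∀ □ cp) by (apply box_mono, all_mono; taut).
      assert (hq : G ⊢ □ ∀ (□ cp ∧ □ cq) ⊃ □ ∀ □ cq) by (apply box_mono, all_mono; taut).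
      taut_from hp hq.
    + apply (imp_trans _ _ _ (box_and _ _)), box_mono, all_and.
  - apply strict_imp_intro, (imp_trans _ _ _ (box_T _)), all_T.
  - apply strict_imp_intro, box_all_4.
  - apply strict_iff_intro; [apply ex_or|].
    assert (hp : G ⊢ ∃ □ cp ⊃ ∃ (□ cp ∨ □ cq)) by (apply ex_mono; taut).
    assert (hq : G ⊢ ∃ □ cq ⊃ ∃ (□ cp ∨ □ cq)) by (apply ex_mono; taut).
    taut_from hp hq.
  - apply strict_imp_intro; taut_from (all_T (¬ □ cp)).
  - apply strict_imp_intro, imp_contra, (imp_trans _ _ _ (all_4 _)), all_mono; taut.
  - apply strict_imp_intro; taut_from (all_5 (□ cp)) (all_ex_and (∃ □ cp) (□ cq)).
  - apply strict_imp_intro, ex_box_all.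
  - apply strict_imp_intro, (imp_trans _ _ _ (ex_persistent _ (box_4 cp))), box_mono, all_5.
Qed.

Lemma gtr_isubst (s : nat -> iform) a :
  (G ⊢ gtr (isubst s a) ⊃ csubst (fun n => gtr (s n)) (gtr a)) /\
  (G ⊢ csubst (fun n => gtr (s n)) (gtr a) ⊃ gtr (isubst s a)).
Proof.
  induction a as [n| |a1 [h1 h1'] a2 [h2 h2']|a1 [h1 h1'] a2 [h2 h2']
                  |a1 [h1 h1'] a2 [h2 h2']|a1 [h1 h1']|a1 [h1 h1']]; simpl.
  - split; [apply gtr_persistent | apply box_T].
  - split; taut.
  - split; [taut_from h1 h2 | taut_from h1' h2'].
  - split; [taut_from h1 h2 | taut_from h1' h2'].
  - split; apply box_mono; [taut_from h1' h2 | taut_from h1 h2'].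
  - split; apply box_mono, all_mono; assumption.
  - split; apply ex_mono; assumption.
Qed.

Lemma gtr_mipc_ext (Gi : iform -> Prop) :
  (forall b, Gi b -> G ⊢ gtr b) -> forall b, mipc_ext Gi b -> G ⊢ gtr b.
Proof.
  intros hGi b hb; induction hb.
  - now apply gtr_ipc_axiom.
  - now apply gtr_mipc_axiom.
  - now apply hGi.
  - exact (ms_mp _ _ _ (strict_imp_imp _ _ IHhb1) IHhb2).
  - exact (ms_mp _ _ _ (proj2 (gtr_isubst s a)) (ms_subst _ _ _ IHhb)).
  - exact (ms_necBox _ _ (ms_necAll _ _ IHhb)).
Qed.

Lemma gtr_Kur : G ⊢ gtr kur_axiom -> forall b, Kur b -> G ⊢ gtr b.
Proof. intros hkur; apply gtr_mipc_ext; intros b ->; exact hkur. Qed.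

Lemma lkur_of_kurt : G ⊢ gtr kur_axiom -> G ⊢ lkur_axiom.
Proof.
  intros hkur; apply strict_imp_imp in hkur; cbv [ip] in hkur; cbn [gtr] in hkur.
  assert (hpremise : G ⊢ □ ∀ ◇ □ cp ⊃ □ ∀ ((□ cp ⇒ ⊥) ⇒ ⊥)).
  { apply (imp_trans _ _ _ (box_all_box _)), box_mono, all_mono, box_dia_strict_dneg. }
  assert (hconclusion : G ⊢ ((□ ∀ □ cp ⇒ ⊥) ⇒ ⊥) ⊃ ◇ ∀ cp).
  { apply (imp_trans _ _ _ (strict_dneg_box_dia _)), (imp_trans _ _ _ (box_T _)), dia_mono.
    apply (imp_trans _ _ _ (box_T _)), all_mono, box_T. }
  exact (imp_trans _ _ _ hpremise (imp_trans _ _ _ hkur hconclusion)).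
Qed.

Lemma kurt_of_grz_lkur : G ⊢ grz_axiom -> G ⊢ lkur_axiom -> G ⊢ gtr kur_axiom.
Proof.
  intros hgrz hlkur; cbv [kur_axiom INeg ip]; cbn [gtr].
  apply strict_imp_intro.
  assert (hlkur' : G ⊢ □ ∀ ◇ □ □ cp ⊃ ◇ ∀ □ cp)
    by exact (ms_subst _ (subst_pq (□ cp) (□ cp)) _ hlkur).
  assert (hdneg : G ⊢ ((□ cp ⇒ ⊥) ⇒ ⊥) ⊃ ◇ □ □ cp).
  { apply (imp_trans _ _ _ (strict_dneg_box_dia _)), (imp_trans _ _ _ (box_T _)).
    apply dia_mono, box_4. }
  assert (h : G ⊢ □ ∀ ((□ cp ⇒ ⊥) ⇒ ⊥) ⊃ □ ◇ ∀ □ cp).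
  { apply box_4_mono, (imp_trans _ _ _ (box_mono _ _ (all_mono _ _ hdneg))), hlkur'. }
  apply (imp_trans _ _ _ (box_4_mono _ _ (imp_trans _ _ _ h (box_dia_of_grz _ hgrz)))).
  apply box_dia_strict_dneg.
Qed.

End GoedelTranslation.

Section FiniteKripkeSemantics.
Context {W : Type} (worlds : list W) (R E : W -> W -> bool).

Fixpoint sat (V : nat -> W -> bool) (a : cform) (w : W) : bool :=
  match a with
  | CVar n => V n w
  | CBot => false
  | CAnd x y => sat V x w && sat V y w
  | COr x y => sat V x w || sat V y w
  | CImp x y => implb (sat V x w) (sat V y w)
  | CBox x => forallb (fun u => implb (R w u) (sat V x u)) worlds
  | CAll x => forallb (fun u => implb (E w u) (sat V x u)) worlds
  end.

Definition valid (a : cform) : Prop := forall V w, sat V a w = true.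

Lemma ceval_sat V a w : ceval (fun b => sat V b w) a = sat V a w.
Proof. induction a; simpl; try rewrite IHa1, IHa2; reflexivity. Qed.

Lemma forallb_ext (f g : W -> bool) : (forall u, f u = g u) -> forallb f worlds = forallb g worlds.
Proof. intros hfg; induction worlds as [|u l IH]; simpl; [|rewrite hfg, IH]; reflexivity. Qed.

Lemma sat_csubst V s a w : sat V (csubst s a) w = sat (fun n u => sat V (s n) u) a w.
Proof.
  revert w; induction a; intros w; simpl; try rewrite IHa1, IHa2;
    try (apply forallb_ext; intros u; rewrite IHa); reflexivity.
Qed.

Lemma valid_nec (rel : W -> W -> bool) a V w :
  valid a -> forallb (fun u => implb (rel w u) (sat V a u)) worlds = true.
Proof. intros ha; apply forallb_forall; intros u _; rewrite ha; apply implb_true_r. Qed.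

Lemma ms4_ext_sound (Gc : cform -> Prop) :
  (forall a, ms4_axiom a -> valid a) -> (forall a, Gc a -> valid a) ->
  forall a, Gc ⊢ a -> valid a.
Proof.
  intros hax hGc a ha; induction ha; intros V w.
  - rewrite <- ceval_sat; apply H.
  - now apply hax.
  - now apply hGc.
  - specialize (IHha1 V w); specialize (IHha2 V w); simpl in IHha1.
    now rewrite IHha2 in IHha1.
  - rewrite sat_csubst; apply IHha.
  - now apply valid_nec.
  - now apply valid_nec.
Qed.

End FiniteKripkeSemantics.

Inductive world := Root | Top1 | Top2.

Definition three_worlds : list world := [Root; Top1; Top2].

Definition three_R (w u : world) : bool :=
  match w, u with
  | Root, _ => true
  | _, Root => false
  | _, _ => true
  end.

Definition three_E (w u : world) : bool :=
  match w, u with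
  | Top1, Top1 => true
  | Top1, _ | _, Top1 => false
  | _, _ => true
  end.

Ltac decide_sat V :=
  repeat match goal with |- context [V ?n ?w] => destruct (V n w) end; reflexivity.

Lemma three_ms4_axiom a : ms4_axiom a -> valid three_worlds three_R three_E a.
Proof. intros [] V []; simpl; decide_sat V. Qed.

Lemma three_lkur : valid three_worlds three_R three_E lkur_axiom.
Proof. intros V []; simpl; decide_sat V. Qed.

Lemma kurt_not_LKur : ~ LKur (gtr kur_axiom).
Proof.
  intros h.
  assert (hsound : valid three_worlds three_R three_E (gtr kur_axiom)).
  { apply (ms4_ext_sound _ _ _ (fun a => a = lkur_axiom) three_ms4_axiom); [|exact h].
    intros a ->; exact three_lkur. }
  specialize (hsound (fun _ w => match w with Root => false | _ => true end) Top2).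
  vm_compute in hsound; discriminate.
Qed.

Lemma kurt_GKur : GKur (gtr kur_axiom).
Proof. apply ms_extra; exists kur_axiom; split; [now apply mi_extra | reflexivity]. Qed.

Lemma LKur_GKur a : LKur a -> GKur a.
Proof. apply ms4_ext_sub; intros b ->; apply lkur_of_kurt, kurt_GKur. Qed.

Theorem proposition4p14 :
  ((forall a, LKur a -> GKur a) /\ (exists a, GKur a /\ ~ LKur a)) /\
  (forall a, join MGrz LKur a <-> join MGrz GKur a).
Proof.
  split; [split|].
  - exact LKur_GKur.
  - exists (gtr kur_axiom); split; [exact kurt_GKur | exact kurt_not_LKur].
  - intros a; split; apply ms4_ext_sub.
    + intros b [hb|hb]; apply ms_extra; [left | right; apply LKur_GKur]; exact hb.
    + intros b [hb|hb]; [apply ms_extra; left; exact hb|].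
      assert (hgrz : join MGrz LKur grz_axiom)
        by exact (ms_extra _ _ (or_introl (ms_extra _ _ eq_refl))).
      assert (hlkur : join MGrz LKur lkur_axiom)
        by exact (ms_extra _ _ (or_intror (ms_extra _ _ eq_refl))).
      revert b hb; apply ms4_ext_sub; intros b [c [hc ->]].
      exact (gtr_Kur (kurt_of_grz_lkur hgrz hlkur) c hc).
Qed.
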